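(* Let $\{\theta_m\}$ satisfy $\theta_1\ge\theta_2\ge\cdots\ge0$, $\theta_m\to0$; $\mathcal B=\mathcal B(\{\theta_m\})$; $b_1,b_2>0$. There exists $C_3>0$, depending only on $b_1,b_2$ (besides $N$ and $\{\theta_m\}$), such that for all $m\in\mathbb N$ with $\theta_m\le1$ and every $g\in V$ satisfying (H), writing $g_m=E_mg$, one has $\mathscr L_{g_m}(\mathcal B)\subset\mathcal B$ and $\|\mathscr L_g-\mathscr L_{g_m}\|_{\mathcal B\to\mathcal B}\le C_3\theta_m$.
   Context: $\Sigma_{\mathbf A}^+$ is the one-sided Markov shift of an $N\times N$ zero-one aperiodic matrix $\mathbf A$, $\sigma_{\mathbf A}$ the shift. $\mathrm{var}_k(\phi)=\sup\{|\phi(\omega)-\phi(\omega')|:\omega_j=\omega'_j,\ 0\le j\le k-1\}$; $V=\{\phi:\mathrm{var}_k(\phi)^{1/k}\to0\}$. $(\mathscr L_g\phi)(\omega)=\sum_{\sigma_{\mathbf A}\omega'=\omega}e^{g(\omega')}\phi(\omega')$. $\mathcal B(\{\theta_m\})=\{\phi\in V:\exists C\ge0,\ \mathrm{var}_k(\phi)\le C\theta_{k+1}^k\ \forall k\ge0\}$ with norm $\|\phi\|_\infty+\inf C$. Fix a Borel probability $\mu$ charging all nonempty open sets; $(E_m\phi)(\omega)=\mu([\omega|m])^{-1}\int_{[\omega|m]}\phi\,d\mu$, $[\omega|m]=\{\xi:\xi_j=\omega_j,0\le j\le m-1\}$. Condition (H) on $g\in V$: $e^{\max\mathrm{Re}\,g}\le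 b_1$ and $\mathrm{var}_k(g)\le b_2\theta_k^k$ for all $k\in\mathbb N$. *)

From HB Require Import structures.
From mathcomp Require Import all_boot all_order all_algebra.
From mathcomp Require Import all_classical all_reals all_analysis.
From mathcomp Require Import complex.
Set Implicit Arguments. Unset Strict Implicit. Unset Printing Implicit Defensive.
Import Order.TTheory GRing.Theory Num.Theory.
Import numFieldNormedType.Exports.
Local Open Scope classical_set_scope.
Local Open Scope ring_scope.

Definition cmod (R : realType) (z : R[i]) : R :=
  Num.sqrt (complex.Re z ^+ 2 + complex.Im z ^+ 2).

Definition cexp (R : realType) (z : R[i]) : R[i] :=
  Complex (expR (complex.Re z) * cos (complex.Im z)) (expR (complex.Re z) * sin (complex.Im z)).

Definition zero_one (N : nat) (A : 'M[nat]_N) : Prop :=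
  forall i j, A i j = 0%N \/ A i j = 1%N.

Definition mxpow (N : nat) (A : 'M[nat]_N) (M : nat) : 'M[nat]_N :=
  iter M (mulmx A) 1%:M.

Definition aperiodic (N : nat) (A : 'M[nat]_N) : Prop :=
  exists M : nat, (0 < M)%N /\ forall i j, (0 < mxpow A M i j)%N.

Definition admissible (N : nat) (A : 'M[nat]_N) (w : nat -> 'I_N) : Prop :=
  forall j, A (w j) (w j.+1) = 1%N.

Definition Sigma (N : nat) (A : 'M[nat]_N) := {w : nat -> 'I_N | admissible A w}.
HB.instance Definition _ N A := gen_eqMixin (@Sigma N A).
HB.instance Definition _ N A := gen_choiceMixin (@Sigma N A).

Definition sshift (N : nat) (A : 'M[nat]_N) (w : Sigma A) : Sigma A :=
  exist (admissible A) (fun j => proj1_sig w j.+1) (fun j => proj2_sig w j.+1).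

Definition cyl (N : nat) (A : 'M[nat]_N) (w : Sigma A) (m : nat) : set (Sigma A) :=
  [set x | forall j, (j < m)%N -> proj1_sig x j = proj1_sig w j].

(* open sets of the (product) topology of Sigma_A^+ *)
Definition isOpenS (N : nat) (A : 'M[nat]_N) (U : set (Sigma A)) : Prop :=
  forall w, U w -> exists m, cyl w m `<=` U.

(* a pointed copy of Sigma_A^+ (the base point is only needed by the
   measure-theory library; Sigma_A^+ is nonempty as it carries a probability) *)
Definition SigmaP (N : nat) (A : 'M[nat]_N) (w0 : Sigma A) := Sigma A.
HB.instance Definition _ N A w0 := Choice.on (@SigmaP N A w0).
HB.instance Definition _ N A w0 := isPointed.Build (@SigmaP N A w0) w0.

Definition openSets (N : nat) (A : 'M[nat]_N) (w0 : Sigma A) : set (set (SigmaP w0)) :=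
  [set U | isOpenS U].
Arguments openSets {N A} w0.

Definition BorelSigma (N : nat) (A : 'M[nat]_N) (w0 : Sigma A) :=
  g_sigma_algebraType (openSets w0).

Section FunSpaces.
Context (R : realType) (N : nat) (A : 'M[nat]_N).
Local Notation S := (Sigma A).

Definition var (k : nat) (phi : S -> R[i]) : \bar R :=
  ereal_sup [set e | exists x y : S,
     (forall j, (j < k)%N -> proj1_sig x j = proj1_sig y j) /\
     e = (cmod (phi x - phi y))%:E].

Definition inV (phi : S -> R[i]) : Prop :=
  (exists K, forall k, (K <= k)%N -> (var k phi < +oo)%E) /\
  ((fun k : nat => powR (fine (var k phi)) (k%:R^-1)) @ \oo --> (0 : R)).

Definition inB (theta : nat -> R) (phi : S -> R[i]) : Prop :=
  inV phi /\ exists C : R, 0 <= C /\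
    forall k, (var k phi <= (C * theta k.+1 ^+ k)%:E)%E.

Definition normB (theta : nat -> R) (phi : S -> R[i]) : \bar R :=
  (ereal_sup [set (cmod (phi x))%:E | x in [set: S]] +
   ereal_inf (EFin @` [set C : R | (0 <= C)%R /\
      forall k, (var k phi <= (C * theta k.+1 ^+ k)%:E)%E]))%E.

Definition transfer (g phi : S -> R[i]) (w : S) : R[i] :=
  \sum_(w' \in @sshift N A @^-1` [set w]) (cexp (g w') * phi w').

End FunSpaces.

Definition Cintegral (R : realType) (N : nat) (A : 'M[nat]_N) (w0 : Sigma A)
  (mu : probability (BorelSigma w0) R) (D : set (Sigma A)) (f : Sigma A -> R[i])
  : R[i] :=
  Complex (Rintegral mu D (fun x => complex.Re (f x))) (Rintegral mu D (fun x => complex.Im (f x))).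

Definition Em (R : realType) (N : nat) (A : 'M[nat]_N) (w0 : Sigma A)
  (mu : probability (BorelSigma w0) R) (m : nat) (phi : Sigma A -> R[i])
  (w : Sigma A) : R[i] :=
  Complex ((fine (mu (cyl w m)))^-1) 0 * Cintegral mu (cyl w m) phi.

Definition charges_open (R : realType) (N : nat) (A : 'M[nat]_N) (w0 : Sigma A)
  (mu : probability (BorelSigma w0) R) : Prop :=
  forall U : set (Sigma A), isOpenS U -> U !=set0 -> (0 < mu U)%E.

Definition condH (R : realType) (N : nat) (A : 'M[nat]_N)
  (b1 b2 : R) (theta : nat -> R) (g : Sigma A -> R[i]) : Prop :=
  (forall x, expR (complex.Re (g x)) <= b1) /\
  (forall k, (1 <= k)%N -> (var k g <= (b2 * theta k ^+ k)%:E)%E).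

From HB Require Import structures.
From mathcomp Require Import all_boot all_order all_algebra.
From mathcomp Require Import all_classical all_reals all_analysis.
From mathcomp Require Import complex.
From mathcomp Require Import ring lra.
Import Order.TTheory GRing.Theory Num.Theory.
Import numFieldNormedType.Exports.
Local Open Scope classical_set_scope.
Local Open Scope ring_scope.
Local Open Scope complex_scope.

(* A preimage of w under the shift is a one-letter extension a.w with
   A a w_0 = 1, so L_g phi (w) = sum_a u(a.w) phi(a.w) with the weight
   u = e^g; we study such weighted transfer operators L_u for an arbitrary
   weight u.  They are linear in u, so L_g - L_{g_m} = L_{e^g - e^{g_m}}.
   The central estimate (wtransfer_normB) says: if |u| <= U and
   var_{k+1}(u) <= W theta_{k+1}^k, then L_u maps B into B with
   ||L_u phi||_B = O(U + W) ||phi||_B.  It remains to bound the weights: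
   - E_m g is constant on m-cylinders and |g - E_m g| <= 2 b2 theta_m^m
     (an average over a cylinder stays within the oscillation of g there);
   - e^z is Lipschitz with constant 6B on the half plane e^{Re z} <= B;
   so e^{g_m} is a weight with U, W = O(1), and e^g - e^{g_m} is a weight
   with U, W = O(theta_m), which gives the two claims of the theorem. *)

Section ComplexModulus.
Context {R : realType}.
Implicit Types (z w : R[i]) (a b : R).

Lemma cmodE z : (cmod z)%:C = `|z|.
Proof. by rewrite normc_def. Qed.

Lemma cmod_ge0 z : 0 <= cmod z.
Proof. exact: sqrtr_ge0. Qed.

Lemma cmod0 : cmod (0 : R[i]) = 0.
Proof. by rewrite /cmod /= expr0n /= addr0 sqrtr0. Qed.

Lemma cmodD z w : cmod (z + w) <= cmod z + cmod w.
Proof. by rewrite -lecR rmorphD /= !cmodE ler_normD. Qed.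

Lemma cmodM z w : cmod (z * w) = cmod z * cmod w.
Proof. by apply: complexI; rewrite rmorphM /= !cmodE normrM. Qed.

Lemma cmodN z : cmod (- z) = cmod z.
Proof. by apply: complexI; rewrite !cmodE normrN. Qed.

Lemma cmodBC z w : cmod (z - w) = cmod (w - z).
Proof. by rewrite -cmodN opprB. Qed.

Lemma cmod_sum (I : Type) (r : seq I) (P : pred I) (F : I -> R[i]) :
  cmod (\sum_(i <- r | P i) F i) <= \sum_(i <- r | P i) cmod (F i).
Proof.
rewrite -lecR cmodE rmorph_sum /=.
under [X in _ <= X]eq_bigr do rewrite cmodE.
exact: ler_norm_sum.
Qed.

Lemma ReB z w : complex.Re (z - w) = complex.Re z - complex.Re w.
Proof. by case: z; case: w. Qed.

Lemma ImB z w : complex.Im (z - w) = complex.Im z - complex.Im w.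
Proof. by case: z; case: w. Qed.

Lemma Re_le_cmod z : `|complex.Re z| <= cmod z.
Proof.
case: z => a b; rewrite /cmod /= -sqrtr_sqr ler_sqrt ?addr_ge0 ?sqr_ge0 //.
by rewrite lerDl sqr_ge0.
Qed.

Lemma Im_le_cmod z : `|complex.Im z| <= cmod z.
Proof.
case: z => a b; rewrite /cmod /= -sqrtr_sqr ler_sqrt ?addr_ge0 ?sqr_ge0 //.
by rewrite lerDr sqr_ge0.
Qed.

Lemma cmod_le_ReIm z : cmod z <= `|complex.Re z| + `|complex.Im z|.
Proof.
case: z => a b /=.
have -> : Complex a b = Complex a 0 + Complex 0 b.
  by apply/eqP; rewrite eq_complex /= addr0 add0r !eqxx.
have cmod_real : cmod (Complex a 0) = `|a|.
  by rewrite /cmod /= expr0n /= addr0 sqrtr_sqr.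
have cmod_imag : cmod (Complex 0 b) = `|b|.
  by rewrite /cmod /= expr0n /= add0r sqrtr_sqr.
by rewrite -cmod_real -cmod_imag cmodD.
Qed.

Lemma cmod_cexp z : cmod (cexp z) = expR (complex.Re z).
Proof.
rewrite /cmod /cexp /= !exprMn -mulrDr addrC sin2cos2 subrK mulr1.
by rewrite sqrtr_sqr ger0_norm // expR_ge0.
Qed.

Lemma cexpD z w : cexp (z + w) = cexp z * cexp w.
Proof.
case: z => a b; case: w => c d.
rewrite /cexp /=; apply/eqP; rewrite eq_complex /= expRD cosD sinD.
by apply/andP; split; apply/eqP; ring.
Qed.

End ComplexModulus.

Section ComplexExpLipschitz.
Context {R : realType}.
Implicit Types (z w : R[i]) (x y : R).

Lemma ler_dist_derive {f df : R -> R} {L : R} :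
  continuous f -> (forall t : R, is_derive t (1 : R) f (df t)) ->
  (forall t, `|df t| <= L) -> forall x y, `|f x - f y| <= L * `|x - y|.
Proof.
move=> fC fD dfL x y.
wlog xy : x y / y <= x.
  move=> H; case: (leP y x) => [/H//|/ltW /H].
  by rewrite distrC [`|y - x|]distrC.
have [c _ ->] := MVT_segment xy (fun t _ => fD t) (continuous_subspaceT fC).
by rewrite normrM ler_wpM2r.
Qed.

Lemma sin_lip x y : `|sin x - sin y| <= `|x - y|.
Proof.
have := ler_dist_derive (@continuous_sin R) (@is_derive_sin R) (@cos_max R) x y.
by rewrite mul1r.
Qed.

Lemma cos_lip x y : `|cos x - cos y| <= `|x - y|.
Proof.
have dcos t : `|- sin t| <= 1 :> R by rewrite normrN sin_max.
have := ler_dist_derive (@continuous_cos R) (@is_derive_cos R) dcos x y.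
by rewrite mul1r.
Qed.

Lemma expR_sub1 x : x <= 1/2 -> `|expR x - 1| <= 2 * `|x|.
Proof.
move=> x2; have e0 := expR_ge1Dx x.
case: (leP 0 x) => x0; last first.
  rewrite ler0_norm ?subr_le0; last by rewrite -expR0 ler_expR ltW.
  by rewrite ltr0_norm //; lra.
have h := expR_ge1Dx (- x); rewrite expRN in h.
have ex : 0 < expR x := expR_gt0 x.
have h2 : expR x * (1 - x) <= 1.
  by rewrite -[X in _ <= X](mulfV (lt0r_neq0 ex)) ler_pM2l // addrC.
rewrite ger0_norm ?subr_ge0 ?(le_trans _ e0) ?lerDl // ger0_norm //.
have : expR x <= 2 by nra.
nra.
Qed.

Lemma cexp_sub1 {z : R[i]} : cmod z <= 1/2 -> cmod (cexp z - 1) <= 6 * cmod z.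
Proof.
case: z => a b hz.
have ha := Re_le_cmod (Complex a b); have hb := Im_le_cmod (Complex a b).
rewrite /= in ha hb; set c := cmod _ in ha hb hz *.
have a2 : `|a| <= 1/2 by lra.
have ea : `|expR a - 1| <= 2 * `|a|.
  by apply: expR_sub1; move: a2; rewrite ler_norml => /andP[_].
have e2 : expR a <= 2 by move: ea; rewrite ler_norml => /andP[_ h]; lra.
have ep := expR_ge0 a.
have hs : `|sin b| <= `|b| by have := sin_lip b 0; rewrite sin0 !subr0.
have hc : `|cos b - 1| <= `|b| by have := cos_lip b 0; rewrite cos0 !subr0.
apply: le_trans (cmod_le_ReIm _) _.
rewrite /cexp /= subr0.
have -> : expR a * cos b - 1 = expR a * (cos b - 1) + (expR a - 1) by ring.
apply: le_trans (lerD (ler_normD _ _) (lexx _)) _.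
rewrite !normrM (ger0_norm ep).
have h1 : expR a * `|cos b - 1| <= 2 * `|b|.
  by apply: le_trans (ler_wpM2l ep hc) _; apply: ler_wpM2r.
have h2 : expR a * `|sin b| <= 2 * `|b|.
  by apply: le_trans (ler_wpM2l ep hs) _; apply: ler_wpM2r.
lra.
Qed.

Lemma cexp_lip {z w : R[i]} {B : R} :
  expR (complex.Re z) <= B -> expR (complex.Re w) <= B ->
  cmod (cexp z - cexp w) <= 6 * B * cmod (z - w).
Proof.
move=> hz hw.
have B0 : 0 <= B by apply: le_trans hw; exact: expR_ge0.
have c0 := cmod_ge0 (z - w).
case: (leP (cmod (z - w)) (1/2)) => h.
  have -> : cexp z - cexp w = cexp w * (cexp (z - w) - 1).
    by rewrite mulrBr mulr1 -cexpD (addrC w) subrK.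
  rewrite cmodM cmod_cexp.
  apply: le_trans (ler_wpM2l (expR_ge0 _) (cexp_sub1 h)) _.
  have := expR_ge0 (complex.Re w); nra.
apply: le_trans (cmodD _ _) _; rewrite cmodN !cmod_cexp.
nra.
Qed.

End ComplexExpLipschitz.

Section WeightedTransfer.
Context {R : realType} {N : nat} {A : 'M[nat]_N}.
Local Notation S := (Sigma A).

Definition agree (k : nat) (x y : S) : Prop :=
  forall j, (j < k)%N -> proj1_sig x j = proj1_sig y j.

Lemma agree_le {j k x y} : (j <= k)%N -> agree k x y -> agree j x y.
Proof. by move=> jk h i ij; apply: h; apply: leq_trans jk. Qed.

Lemma var_le k (f : S -> R[i]) (e : R) :
  (forall x y, agree k x y -> cmod (f x - f y) <= e) -> (var k f <= e%:E)%E.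
Proof.
by move=> H; apply: ge_ereal_sup => _ [x [y [hxy ->]]]; rewrite lee_fin; exact: H.
Qed.

Lemma var_agree {k} {f : S -> R[i]} {e : R} {x y} :
  (var k f <= e%:E)%E -> agree k x y -> cmod (f x - f y) <= e.
Proof.
move=> H hxy; rewrite -lee_fin; apply: le_trans H; apply: ereal_sup_ubound.
by exists x, y; split.
Qed.

Lemma Sigma_eq (x y : S) : proj1_sig x = proj1_sig y -> x = y.
Proof.
case: x => x hx; case: y => y hy /= e; subst y; congr exist.
exact: Prop_irrelevance.
Qed.

(* The word a.x; it is admissible as soon as A a x_0 = 1 (otherwise the
   default value x is returned, which is never used). *)
Definition prepend (a : 'I_N) (x : S) : S :=
  let ax j := if j is j'.+1 then proj1_sig x j' else a in
  match pselect (admissible A ax) with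
  | left H => exist _ ax H | right _ => x end.

Lemma prependE a x : A a (proj1_sig x 0) = 1%N ->
  proj1_sig (prepend a x) = fun j => if j is j'.+1 then proj1_sig x j' else a.
Proof.
move=> h; rewrite /prepend; case: pselect => // -[].
by move=> [|j] /=; [exact: h | exact: (proj2_sig x j)].
Qed.

Lemma preimage_shift w : sshift (A:=A) @^-1` [set w] =
  (prepend ^~ w) @` [set a | A a (proj1_sig w 0) = 1%N].
Proof.
apply/seteqP; split => y /=.
  move=> hy; have y0 : A (proj1_sig y 0) (proj1_sig w 0) = 1%N.
    by rewrite -hy /=; exact: (proj2_sig y 0).
  exists (proj1_sig y 0) => //; apply: Sigma_eq; rewrite prependE //.
  by rewrite -hy; apply: funext => -[|j].
move=> [a ha <-]; apply: Sigma_eq; rewrite /= prependE //.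
Qed.

Lemma prepend_inj w : set_inj [set a | A a (proj1_sig w 0) = 1%N] (prepend ^~ w).
Proof.
move=> a b /set_mem ha /set_mem hb e.
by have := congr1 (fun x => proj1_sig x 0) e; rewrite !prependE.
Qed.

Lemma agree_prepend {k a x y} : A a (proj1_sig x 0) = 1%N ->
  agree k.+1 x y -> agree k.+2 (prepend a x) (prepend a y).
Proof.
move=> ha hxy; have y0 : proj1_sig y 0 = proj1_sig x 0 by rewrite hxy.
move=> [|j] hj; rewrite !prependE ?y0 //=.
exact: hxy.
Qed.

Definition wtransfer (u phi : S -> R[i]) (w : S) : R[i] :=
  \sum_(a < N | A a (proj1_sig w 0) == 1%N) u (prepend a w) * phi (prepend a w).

Lemma transferE (g phi : S -> R[i]) :
  transfer g phi = wtransfer (fun x => cexp (g x)) phi.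
Proof.
apply: funext => w.
rewrite /transfer preimage_shift fsbig_image; last exact: prepend_inj.
rewrite /wtransfer [RHS]bigfs; last 2 first.
- exact: index_enum_uniq.
- by move=> i _; rewrite mem_index_enum.
apply: eq_fsbigl; apply/seteqP; split => i /=; rewrite /mkset.
  by move=> h; rewrite unfold_in /= h.
by rewrite unfold_in /= => /eqP.
Qed.

Lemma wtransferBl (u1 u2 phi : S -> R[i]) :
  (fun w => wtransfer u1 phi w - wtransfer u2 phi w) =
  wtransfer (fun x => u1 x - u2 x) phi.
Proof.
apply: funext => w; rewrite /wtransfer -sumrB.
by apply: eq_bigr => a _; rewrite mulrBl.
Qed.

Lemma sum_letters_le (P : pred 'I_N) (F : 'I_N -> R) c :
  0 <= c -> (forall a, P a -> F a <= c) -> \sum_(a < N | P a) F a <= N%:R * c.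
Proof.
move=> c0 H.
have <- : \sum_(a < N) c = N%:R * c by rewrite sumr_const card_ord mulr_natl.
rewrite [X in _ <= X](bigID P) /=.
rewrite -[X in X <= _]addr0; apply: lerD; first by apply: ler_sum => a /H.
exact: sumr_ge0.
Qed.

Lemma wtransfer_sup {u phi : S -> R[i]} {U P : R} : 0 <= U -> 0 <= P ->
  (forall x, cmod (u x) <= U) -> (forall x, cmod (phi x) <= P) ->
  forall w, cmod (wtransfer u phi w) <= N%:R * (U * P).
Proof.
move=> U0 P0 hu hp w; apply: le_trans (cmod_sum _ _ _ _) _.
apply: sum_letters_le; first exact: mulr_ge0.
by move=> a _; rewrite cmodM; apply: ler_pM => //; exact: cmod_ge0.
Qed.

Lemma wtransfer_osc {u phi : S -> R[i]} {k : nat} {U P Wk Pk : R} :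
  0 <= U -> 0 <= P -> 0 <= Wk -> 0 <= Pk ->
  (forall x, cmod (u x) <= U) -> (forall x, cmod (phi x) <= P) ->
  (forall x y, agree k.+2 x y -> cmod (u x - u y) <= Wk) ->
  (forall x y, agree k.+2 x y -> cmod (phi x - phi y) <= Pk) ->
  forall x y, agree k.+1 x y ->
  cmod (wtransfer u phi x - wtransfer u phi y) <= N%:R * (Wk * P + U * Pk).
Proof.
move=> U0 P0 W0 Pk0 hu hp hW hP x y hxy.
have y0 : proj1_sig y 0 = proj1_sig x 0 by rewrite hxy.
rewrite /wtransfer y0 -sumrB; apply: le_trans (cmod_sum _ _ _ _) _.
apply: sum_letters_le; first by apply: addr_ge0; apply: mulr_ge0.
move=> a /eqP ha; have hag := agree_prepend ha hxy.
set ax := prepend a x; set ay := prepend a y.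
have -> : u ax * phi ax - u ay * phi ay =
  (u ax - u ay) * phi ax + u ay * (phi ax - phi ay) by ring.
apply: le_trans (cmodD _ _) _; rewrite !cmodM; apply: lerD.
  by apply: ler_pM => //; [exact: cmod_ge0|exact: cmod_ge0|exact: hW].
by apply: ler_pM => //; [exact: cmod_ge0|exact: cmod_ge0|exact: hP].
Qed.

End WeightedTransfer.

Section ThetaSpace.
Context {R : realType} {N : nat} {A : 'M[nat]_N}.
Variable theta : nat -> R.
Hypothesis theta_decr : forall m, (1 <= m)%N -> theta m.+1 <= theta m.
Hypothesis theta_ge0 : forall m, (1 <= m)%N -> 0 <= theta m.
Hypothesis theta_cvg0 : theta @ \oo --> (0 : R).
Local Notation S := (Sigma A).

Definition regular (phi : S -> R[i]) (C : R) : Prop :=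
  forall k x y, agree k x y -> cmod (phi x - phi y) <= C * theta k.+1 ^+ k.

Definition weight_regular (u : S -> R[i]) (W : R) : Prop :=
  forall k x y, agree k.+1 x y -> cmod (u x - u y) <= W * theta k.+1 ^+ k.

Lemma theta_pow_ge0 k : 0 <= theta k.+1 ^+ k.
Proof. by apply: exprn_ge0; exact: theta_ge0. Qed.

Lemma theta_mono i j : (1 <= i)%N -> (i <= j)%N -> theta j <= theta i.
Proof.
move=> i1 /subnK <-; elim: (j - i)%N => [|n IH]; rewrite ?add0n //.
rewrite addSn; apply: le_trans IH; apply: theta_decr.
exact: leq_trans i1 (leq_addl _ _).
Qed.

Lemma theta_pow_le {m n i j : nat} : (1 <= i)%N -> (i <= m)%N -> (j <= n)%N ->
  theta m <= 1 -> theta m ^+ n <= theta i ^+ j.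
Proof.
move=> i1 im jn tm1.
have tm0 : 0 <= theta m by apply: theta_ge0; exact: leq_trans i1 im.
apply: (@le_trans _ _ (theta m ^+ j)); first exact: ler_wiXn2l.
by apply: lerXn2r; rewrite ?nnegrE //; [apply: le_trans tm0 _|]; exact: theta_mono.
Qed.

Lemma theta_pow_shift k : theta k.+2 ^+ k.+1 <= theta 1 * theta k.+1 ^+ k.
Proof.
apply: (@le_trans _ _ (theta k.+1 ^+ k.+1)).
  by apply: lerXn2r; rewrite ?nnegrE ?theta_ge0 //; exact: theta_decr.
by rewrite exprS ler_wpM2r ?theta_pow_ge0 ?theta_mono.
Qed.

Lemma fine_var_ge0 k (f : S -> R[i]) : 0 <= fine (var k f).
Proof.
have [[x _]|nx] := pselect (exists x : S, True).
  have : ((0:R)%:E <= var k f)%E.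
    by apply: ereal_sup_ubound; exists x, x; rewrite subrr cmod0.
  by case: (var k f) => [r| |] //=; rewrite lee_fin.
have -> // : var k f = -oo%E.
by apply/ereal_sup_ninfty => e [x _]; exfalso; apply: nx; exists x.
Qed.

(* A bounded regular function belongs to B: var_k^(1/k) <= (C+1) theta_{k+1}. *)
Lemma regular_inB {f : S -> R[i]} {C : R} : 0 <= C -> regular f C -> inB theta f.
Proof.
move=> C0 hC.
have vk k : (var k f <= (C * theta k.+1 ^+ k)%:E)%E by apply: var_le; exact: hC.
split; last by exists C.
split; first by exists 0%N => k _; apply: le_lt_trans (vk k) _; exact: ltey.
set c1 := C + 1; have c11 : 1 <= c1 by rewrite /c1 lerDr.
have c10 : 0 <= c1 by apply: le_trans c11.
apply: (@squeeze_cvgr _ _ _ _ (fun=> 0) (fun k => c1 * theta k.+1)).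
- exists 1%N => // k /= hk; rewrite powR_ge0 /=.
  have hv : fine (var k f) <= (c1 * theta k.+1) ^+ k.
    have : fine (var k f) <= C * theta k.+1 ^+ k.
      have c0 : 0 <= C * theta k.+1 ^+ k by rewrite mulr_ge0 ?theta_pow_ge0.
      by move: (vk k) c0; case: (var k f) => [r| |] //=; rewrite ?lee_fin.
    move/le_trans; apply; rewrite exprMn ler_wpM2r ?theta_pow_ge0 //.
    apply: le_trans (_ : c1 <= _); first by rewrite /c1 lerDl.
    by rewrite -{1}[c1]expr1; exact: ler_weXn2l.
  have th0 : 0 <= c1 * theta k.+1 by apply: mulr_ge0 => //; exact: theta_ge0.
  apply: le_trans (ge0_ler_powR _ _ _ hv) _.
  - by rewrite invr_ge0.
  - by rewrite nnegrE fine_var_ge0.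
  - by rewrite nnegrE exprn_ge0.
  rewrite -powR_mulrn // -powRrM mulfV ?powRr1 //.
  by rewrite pnatr_eq0 -lt0n.
- exact: cvg_cst.
- by rewrite -[0](mulr0 c1); apply: cvgMl_tmp; rewrite (cvg_shiftS theta).
Qed.

Lemma normB_le {f : S -> R[i]} {P C : R} :
  0 <= C -> (forall x, cmod (f x) <= P) -> regular f C ->
  (normB theta f <= (P + C)%:E)%E.
Proof.
move=> C0 hP hC; rewrite /normB EFinD; apply: leeD.
  by apply: ge_ereal_sup => _ [x _ <-]; rewrite lee_fin.
apply: ereal_inf_lbound; exists C => //; split => // k.
by apply: var_le => x y; exact: hC.
Qed.

Lemma inB_bounds (x0 : S) {phi : S -> R[i]} : inB theta phi ->
  exists P C, [/\ 0 <= P, 0 <= C, forall x, cmod (phi x) <= P & regular phi C].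
Proof.
move=> [_ [C [C0 hC]]].
have hreg : regular phi C by move=> k x y h; exact: var_agree (hC k) h.
exists (cmod (phi x0) + C), C; split; rewrite ?addr_ge0 ?cmod_ge0 // => x.
have := hreg 0%N x x0 (fun j (hj : (j < 0)%N) => False_ind _ (notF hj)).
rewrite expr0 mulr1 => h0.
rewrite -(subrK (phi x0) (phi x)); apply: le_trans (cmodD _ _) _; lra.
Qed.

Lemma normB_split (x0 : S) {phi : S -> R[i]} : inB theta phi ->
  exists P I, [/\ normB theta phi = (P + I)%:E, 0 <= P,
    forall x, cmod (phi x) <= P &
    forall e, 0 < e -> exists C, [/\ 0 <= C, regular phi C & C <= I + e]].
Proof.
move=> hB; have [P0 [C0 [_ _ hP0 _]]] := inB_bounds x0 hB.
move: hB => [_ [C1 [C10 hC1]]].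
set SS := [set (cmod (phi x))%:E | x in [set: S]].
set II := EFin @` [set C : R | (0 <= C)%R /\
      forall k, (var k phi <= (C * theta k.+1 ^+ k)%:E)%E].
have shi : (ereal_sup SS <= P0%:E)%E.
  by apply: ge_ereal_sup => _ [x _ <-]; rewrite lee_fin.
have slo : ((cmod (phi x0))%:E <= ereal_sup SS)%E.
  by apply: ereal_sup_ubound; exists x0.
have ilo : ((0:R)%:E <= ereal_inf II)%E.
  by apply: le_ereal_inf_tmp => _ [C [hC _] <-]; rewrite lee_fin.
have ihi : (ereal_inf II <= C1%:E)%E by apply: ereal_inf_lbound; exists C1.
case Es : (ereal_sup SS) shi slo => [p| |] //= shi slo.
case Ei : (ereal_inf II) ilo ihi => [i| |] //= ilo ihi.
exists p, i; split; first by rewrite /normB -/SS -/II Es Ei.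
- by apply: le_trans (cmod_ge0 (phi x0)) _; rewrite -lee_fin.
- by move=> x; rewrite -lee_fin -Es; apply: ereal_sup_ubound; exists x.
move=> e e0; have fin : ereal_inf II \is a fin_num by rewrite Ei.
have [_ [C [hC hCv] <-] hlt] := lb_ereal_inf_adherent e0 fin.
exists C; split => //; first by move=> k x y h; exact: var_agree (hCv k) h.
by move: hlt; rewrite Ei -EFinD lte_fin => /ltW.
Qed.

Lemma normB_le_scale (x0 : S) {f phi : S -> R[i]} {a : R} :
  inB theta phi -> 0 <= a ->
  (forall P C, 0 <= P -> 0 <= C -> (forall x, cmod (phi x) <= P) ->
     regular phi C -> (normB theta f <= (a * (P + C))%:E)%E) ->
  (normB theta f <= a%:E * normB theta phi)%E.
Proof.
move=> hB a0 hf; have [P [I [-> P0 hP hI]]] := normB_split x0 hB.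
apply/lee_addgt0Pr => e e0.
have a1 : 0 < a + 1 by apply: lt_le_trans ltr01 _; rewrite lerDr.
have e'0 : 0 < e / (a + 1) by apply: divr_gt0.
have [C [C0 hC CI]] := hI _ e'0.
apply: le_trans (hf P C P0 C0 hP hC) _; rewrite -EFinM -EFinD lee_fin.
have ee : e / (a + 1) * (a + 1) = e by rewrite divfK // gt_eqF.
have : a * C <= a * (I + e / (a + 1)) by apply: ler_wpM2l.
have := ltW e'0; move: ee; set e' := e / (a + 1) => ee h1 h2.
rewrite -ee; nra.
Qed.

(* L_u phi is regular when the weight u and phi are: on (k+1)-cylinders
   both oscillate on (k+2)-cylinders, and k = 0 is handled by the supremum. *)
Lemma wtransfer_regular {u phi : S -> R[i]} {U W P C : R} :
  0 <= U -> 0 <= W -> 0 <= P -> 0 <= C ->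
  (forall x, cmod (u x) <= U) -> weight_regular u W ->
  (forall x, cmod (phi x) <= P) -> regular phi C ->
  regular (wtransfer u phi) (N%:R * (W * P + U * (C * theta 1)) + 2 * (N%:R * (U * P))).
Proof.
move=> U0 W0 P0 C0 hU hW hP hC.
have sup := wtransfer_sup U0 P0 hU hP.
have N0 : 0 <= N%:R :> R by [].
have T0 : 0 <= theta 1 by exact: theta_ge0.
have K0 : 0 <= N%:R * (W * P + U * (C * theta 1)).
  by apply: mulr_ge0 => //; apply: addr_ge0; apply: mulr_ge0 => //; exact: mulr_ge0.
move=> [|k] x y hxy.
  rewrite expr0 mulr1; apply: le_trans (cmodD _ _) _; rewrite cmodN.
  have := sup x; have := sup y; lra.
have tk := theta_pow_ge0 k.+1.
have hC' x1 y1 : agree k.+2 x1 y1 ->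
    cmod (phi x1 - phi y1) <= C * (theta 1 * theta k.+2 ^+ k.+1).
  move=> h; apply: le_trans (hC _ _ _ h) _; apply: ler_wpM2l => //.
  exact: theta_pow_shift.
have W'0 : 0 <= W * theta k.+2 ^+ k.+1 by exact: mulr_ge0.
have C'0 : 0 <= C * (theta 1 * theta k.+2 ^+ k.+1) by rewrite !mulr_ge0.
apply: le_trans (wtransfer_osc U0 P0 W'0 C'0 hU hP (hW k.+1) hC' x y hxy) _.
have -> : N%:R * (W * theta k.+2 ^+ k.+1 * P +
    U * (C * (theta 1 * theta k.+2 ^+ k.+1))) =
  (N%:R * (W * P + U * (C * theta 1))) * theta k.+2 ^+ k.+1 by ring.
rewrite ler_wpM2r // lerDl; apply: mulr_ge0 => //; apply: mulr_ge0 => //.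
exact: mulr_ge0.
Qed.

Lemma wtransfer_normB (x0 : S) {u phi : S -> R[i]} {U W a : R} :
  0 <= U -> 0 <= W ->
  (forall x, cmod (u x) <= U) -> weight_regular u W ->
  N%:R * (3 * U + W + U * theta 1) <= a -> inB theta phi ->
  inB theta (wtransfer u phi) /\
  (normB theta (wtransfer u phi) <= a%:E * normB theta phi)%E.
Proof.
move=> U0 W0 hU hW Ka hB.
have N0 : 0 <= N%:R :> R by [].
have T0 : 0 <= theta 1 by exact: theta_ge0.
have bounds P C : 0 <= P -> 0 <= C -> (forall x, cmod (phi x) <= P) ->
    regular phi C ->
    let C' := N%:R * (W * P + U * (C * theta 1)) + 2 * (N%:R * (U * P)) in
    [/\ 0 <= C', regular (wtransfer u phi) C' &
        (normB theta (wtransfer u phi) <= (a * (P + C))%:E)%E].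
  move=> P0 C0 hP hC C'.
  have C'0 : 0 <= C'.
    by apply: addr_ge0; repeat apply: mulr_ge0 => //; apply: addr_ge0;
      repeat apply: mulr_ge0.
  have hreg := wtransfer_regular U0 W0 P0 C0 hU hW hP hC.
  split => //; apply: le_trans (normB_le C'0 (wtransfer_sup U0 P0 hU hP) hreg) _.
  rewrite lee_fin.
  apply: le_trans (_ : N%:R * (3 * U + W + U * theta 1) * (P + C) <= _).
    rewrite /C' -subr_ge0.
    have -> : N%:R * (3 * U + W + U * theta 1) * (P + C) -
      (N%:R * (U * P) + (N%:R * (W * P + U * (C * theta 1)) + 2 * (N%:R * (U * P)))) =
      N%:R * (W * C + U * theta 1 * P + 3 * U * C) by ring.
    by repeat apply: mulr_ge0 => //; repeat apply: addr_ge0; repeat apply: mulr_ge0.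
  by rewrite ler_wpM2r ?addr_ge0.
have a0 : 0 <= a.
  apply: le_trans Ka; apply: mulr_ge0 => //.
  by repeat apply: addr_ge0; repeat apply: mulr_ge0.
split.
  have [P [C [P0 C0 hP hC]]] := inB_bounds x0 hB.
  by have [C'0 hreg _] := bounds P C P0 C0 hP hC; exact: regular_inB C'0 hreg.
apply: (normB_le_scale x0 hB a0) => P C P0 C0 hP hC.
by have [] := bounds P C P0 C0 hP hC.
Qed.

End ThetaSpace.

Section Averages.
Context {R : realType} {d : measure_display} {T : measurableType d}.
Variable mu : {measure set T -> \bar R}.

(* The integral, defined for every function, is monotone. *)
Lemma le_integral_pointwise (D : set T) (f1 f2 : T -> \bar R) :
  (forall x, D x -> (f1 x <= f2 x)%E) -> (integral mu D f1 <= integral mu D f2)%E.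
Proof.
move=> H; rewrite /integral; apply: leeB.
  apply: ge_ereal_sup => _ [h hh <-]; apply: ereal_sup_ubound; exists h => //= x.
  apply: le_trans (hh x) _; rewrite !funeposE; apply: le_max2 => //.
  by rewrite /patch; case: ifP => // /set_mem /H.
apply: ge_ereal_sup => _ [h hh <-]; apply: ereal_sup_ubound; exists h => //= x.
apply: le_trans (hh x) _; rewrite !funenegE; apply: le_max2 => //.
by rewrite /patch; case: ifP => // /set_mem /H; rewrite leeN2.
Qed.

Lemma average_near (D : set T) (f : T -> R) (c e m : R) :
  measurable D -> mu D = m%:E -> 0 < m -> (forall x, D x -> `|f x - c| <= e) ->
  `|Rintegral mu D f / m - c| <= e.
Proof.
move=> mD muD m0 H.
have lo : (((c - e) * m)%:E <= integral mu D (fun x => (f x)%:E))%E.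
  rewrite EFinM -muD -integral_cst //; apply: le_integral_pointwise => x /H.
  by rewrite lee_fin ler_distl => /andP[h _]; lra.
have hi : (integral mu D (fun x => (f x)%:E) <= ((c + e) * m)%:E)%E.
  rewrite EFinM -muD -integral_cst //; apply: le_integral_pointwise => x /H.
  by rewrite lee_fin ler_distl => /andP[_ h]; lra.
rewrite /Rintegral; move: lo hi; case: (integral _ _ _) => [r| |] //=.
rewrite !lee_fin => lo hi; rewrite ler_distl.
by rewrite ler_pdivlMr // ler_pdivrMr // lo hi.
Qed.

End Averages.

Section CondExp.
Context {R : realType} {N : nat} {A : 'M[nat]_N} {w0 : Sigma A}
  (mu : probability (BorelSigma w0) R).
Hypothesis mu_open : charges_open mu.
Local Notation S := (Sigma A).

Lemma cyl_open (w : S) m : isOpenS (cyl w m).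
Proof. by move=> x hx; exists m => y hy j hj; rewrite hy // hx. Qed.

Lemma cyl_measurable (w : S) m : measurable (cyl w m : set (BorelSigma w0)).
Proof. by apply: sub_sigma_algebra; exact: cyl_open. Qed.

Lemma cyl_mu (w : S) m : exists2 c : R, mu (cyl w m) = c%:E & 0 < c.
Proof.
have h1 : (mu (cyl w m) <= 1)%E by apply: probability_le1; exact: cyl_measurable.
have h0 : (0 < mu (cyl w m))%E by apply: mu_open; [exact: cyl_open | exists w].
move: h0 h1; case: (mu _) => [r| |] //= h0 _.
by exists r; rewrite -?lte_fin.
Qed.

(* If g stays within e of c on the m-cylinder of w, so does E_m g (w), up to
   a factor 2 accounting for the real and imaginary parts. *)
Lemma Em_near (g : S -> R[i]) m w (c : R[i]) (e : R) :
  (forall x, cyl w m x -> cmod (g x - c) <= e) -> cmod (Em mu m g w - c) <= 2 * e.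
Proof.
move=> H; have [mm hm m0] := cyl_mu w m.
rewrite /Em /Cintegral hm /=.
set I1 := Rintegral _ _ _; set I2 := Rintegral _ _ _.
have -> : Complex mm^-1 0 * Complex I1 I2 = Complex (I1 / mm) (I2 / mm).
  by apply/eqP; rewrite eq_complex /= !mul0r subr0 addr0 ![_^-1 * _]mulrC !eqxx.
have h1 : `|I1 / mm - complex.Re c| <= e.
  apply: average_near (cyl_measurable w m) hm m0 _ => x /H.
  by apply: le_trans; rewrite -ReB; exact: Re_le_cmod.
have h2 : `|I2 / mm - complex.Im c| <= e.
  apply: average_near (cyl_measurable w m) hm m0 _ => x /H.
  by apply: le_trans; rewrite -ImB; exact: Im_le_cmod.
apply: le_trans (cmod_le_ReIm _) _; rewrite ReB ImB /=; lra.
Qed.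

Lemma Em_agree (g : S -> R[i]) {m x y} : agree m x y -> Em mu m g x = Em mu m g y.
Proof.
move=> h; rewrite /Em; suff -> : cyl x m = cyl y m by [].
by apply/seteqP; split => z hz j hj; rewrite hz // h.
Qed.

End CondExp.

(* Common bound for e^{Re g} and e^{Re g_m} under condition (H). *)
Definition expbound {R : realType} (b1 b2 : R) : R := b1 * expR (2 * b2).

Section Weights.
Context {R : realType} {N : nat} {theta : nat -> R}.
Hypothesis theta_decr : forall m, (1 <= m)%N -> theta m.+1 <= theta m.
Hypothesis theta_ge0 : forall m, (1 <= m)%N -> 0 <= theta m.
Context {b1 b2 : R} (b1_gt0 : 0 < b1) (b2_gt0 : 0 < b2).
Context {A : 'M[nat]_N} {w0 : Sigma A} {mu : probability (BorelSigma w0) R}.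
Hypothesis mu_open : charges_open mu.
Context {m : nat} (m_ge1 : (1 <= m)%N) (theta_m_le1 : theta m <= 1).
Context {g : Sigma A -> R[i]} (gH : condH b1 b2 theta g).

Local Notation gm := (Em mu m g).
Local Notation tm := (theta m).
Local Notation expbound := (expbound b1 b2).

Lemma expbound_ge_b1 : b1 <= expbound.
Proof.
rewrite /expbound -[X in X <= _]mulr1 ler_pM2l //.
by rewrite -expR0 ler_expR mulr_ge0 ?(ltW b2_gt0).
Qed.

Lemma expbound_ge0 : 0 <= expbound.
Proof. exact: le_trans (ltW b1_gt0) expbound_ge_b1. Qed.

Lemma Em_close x : cmod (g x - gm x) <= 2 * (b2 * tm ^+ m).
Proof.
rewrite cmodBC; apply: (Em_near _ mu_open) => y hy.
exact: var_agree (gH.2 m m_ge1) hy.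
Qed.

Lemma Em_var {k x y} : (1 <= k)%N -> agree k x y ->
  cmod (gm x - gm y) <= 5 * (b2 * theta k ^+ k).
Proof.
move=> k1 h; have tk : 0 <= theta k ^+ k by rewrite exprn_ge0 ?theta_ge0.
have [mk|km] := leqP m k.
  rewrite (Em_agree mu g (agree_le mk h)) subrr cmod0.
  by apply: mulr_ge0 => //; apply: mulr_ge0 => //; exact: ltW.
have tmk : tm ^+ m <= theta k ^+ k.
  by apply: (theta_pow_le _ theta_decr theta_ge0) => //; exact: ltnW.
have hg : cmod (g x - g y) <= b2 * theta k ^+ k by exact: var_agree (gH.2 k k1) h.
have := Em_close x; have := Em_close y.
have -> : gm x - gm y = - (g x - gm x) + (g x - g y) + (g y - gm y) by ring.
move=> h1 h2; apply: le_trans (cmodD _ _) _.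
apply: le_trans (lerD (cmodD _ _) (lexx _)) _; rewrite cmodN.
have : b2 * tm ^+ m <= b2 * theta k ^+ k by rewrite ler_pM2l.
lra.
Qed.

Lemma exp_Re_g x : expR (complex.Re (g x)) <= expbound.
Proof. exact: le_trans (gH.1 x) expbound_ge_b1. Qed.

Lemma exp_Re_Em x : expR (complex.Re (gm x)) <= expbound.
Proof.
have tmm : b2 * tm ^+ m <= b2.
  rewrite -[X in _ <= X]mulr1 ler_pM2l //.
  apply: le_trans theta_m_le1.
  exact: (theta_pow_le _ theta_decr theta_ge0 m_ge1 (leqnn m) m_ge1 theta_m_le1).
have hRe : complex.Re (gm x) <= complex.Re (g x) + 2 * b2.
  have := Re_le_cmod (gm x - g x); rewrite ReB cmodBC ler_norml => /andP[_].
  have := Em_close x; lra.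
apply: le_trans (_ : expR (complex.Re (g x) + 2 * b2) <= _); first by rewrite ler_expR.
by rewrite expRD /expbound ler_wpM2r ?expR_ge0 ?gH.1.
Qed.

Lemma weight_Em : weight_regular theta (fun x => cexp (gm x))
  (30 * expbound * b2 * theta 1).
Proof.
move=> k x y h; apply: le_trans (cexp_lip (exp_Re_Em x) (exp_Re_Em y)) _.
have hk := Em_var (ltn0Sn k) h.
have B0 := expbound_ge0; have tk := theta_pow_ge0 _ theta_ge0 k.
have t1 : theta k.+1 ^+ k.+1 <= theta 1 * theta k.+1 ^+ k.
  by rewrite exprS ler_wpM2r // (theta_mono _ theta_decr).
apply: le_trans (ler_wpM2l (mulr_ge0 (ler0n _ 6) B0) hk) _.
have : b2 * theta k.+1 ^+ k.+1 <= b2 * (theta 1 * theta k.+1 ^+ k) by rewrite ler_pM2l.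
have : 0 <= expbound * (b2 * theta k.+1 ^+ k.+1).
  apply: mulr_ge0 => //; apply: mulr_ge0; first exact: ltW.
  by rewrite exprn_ge0 ?theta_ge0.
nra.
Qed.

(* e^g - e^{g_m} is a weight of size O(theta_m) ... *)
Lemma diff_sup x : cmod (cexp (g x) - cexp (gm x)) <= 12 * expbound * b2 * tm.
Proof.
apply: le_trans (cexp_lip (exp_Re_g x) (exp_Re_Em x)) _.
have := Em_close x; have B0 := expbound_ge0.
have : b2 * tm ^+ m <= b2 * tm.
  by rewrite ler_pM2l // -[X in _ <= X]expr1 (theta_pow_le _ theta_decr theta_ge0).
have := cmod_ge0 (g x - gm x).
nra.
Qed.

(* ... with regularity O(theta_m) as well: on long cylinders g_m is constant,
   on short ones both terms are small. *)
Lemma weight_diff : weight_regular theta (fun x => cexp (g x) - cexp (gm x))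
  (24 * expbound * b2 * tm).
Proof.
move=> k x y h; have B0 := expbound_ge0; have tk := theta_pow_ge0 _ theta_ge0 k.
have t0 : 0 <= tm := theta_ge0 _ m_ge1.
have [mk|km] := leqP m k.+1.
  rewrite (Em_agree mu g (agree_le mk h)).
  have -> : cexp (g x) - cexp (gm y) - (cexp (g y) - cexp (gm y)) =
    cexp (g x) - cexp (g y) by ring.
  apply: le_trans (cexp_lip (exp_Re_g x) (exp_Re_g y)) _.
  have hg := var_agree (gH.2 k.+1 (ltn0Sn k)) h.
  have t1 : theta k.+1 ^+ k.+1 <= tm * theta k.+1 ^+ k.
    by rewrite exprS ler_wpM2r // (theta_mono _ theta_decr).
  have : b2 * theta k.+1 ^+ k.+1 <= b2 * (tm * theta k.+1 ^+ k) by rewrite ler_pM2l.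
  have := cmod_ge0 (g x - g y).
  have : 0 <= b2 * (expbound * (tm * theta k.+1 ^+ k)).
    by apply: mulr_ge0; [exact: ltW | apply: mulr_ge0 => //; exact: mulr_ge0].
  nra.
have e1 : tm ^+ m <= tm * theta k.+1 ^+ k.
  have -> : tm ^+ m = tm * tm ^+ m.-1 by rewrite -exprS prednK.
  rewrite ler_wpM2l //.
  have km' : (k <= m.-1)%N by rewrite -ltnS prednK // ltnW.
  by apply: (theta_pow_le _ theta_decr theta_ge0) => //; exact: ltnW.
apply: le_trans (cmodD _ _) _; rewrite cmodN.
have l1 := cexp_lip (exp_Re_g x) (exp_Re_Em x).
have l2 := cexp_lip (exp_Re_g y) (exp_Re_Em y).
have h1 := Em_close x; have h2 := Em_close y.
have small : b2 * tm ^+ m <= b2 * (tm * theta k.+1 ^+ k) by rewrite ler_pM2l.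
have := cmod_ge0 (g x - gm x); have := cmod_ge0 (g y - gm y).
have : 6 * expbound * cmod (g x - gm x) <= 6 * expbound * (2 * (b2 * tm ^+ m)).
  by apply: ler_wpM2l => //; exact: mulr_ge0.
have : 6 * expbound * cmod (g y - gm y) <= 6 * expbound * (2 * (b2 * tm ^+ m)).
  by apply: ler_wpM2l => //; exact: mulr_ge0.
have : expbound * (b2 * tm ^+ m) <= expbound * (b2 * (tm * theta k.+1 ^+ k)).
  exact: ler_wpM2l.
nra.
Qed.

End Weights.

Theorem lemma3p7 (R : realType) (N : nat) (theta : nat -> R)
  (theta_decr : forall m, (1 <= m)%N -> theta m.+1 <= theta m)
  (theta_ge0 : forall m, (1 <= m)%N -> 0 <= theta m)
  (theta_cvg0 : theta @ \oo --> (0 : R))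
  (b1 b2 : R) (b1_gt0 : 0 < b1) (b2_gt0 : 0 < b2) :
  exists C3 : R, 0 < C3 /\
  forall (A : 'M[nat]_N), zero_one A -> aperiodic A ->
  forall (w0 : Sigma A) (mu : probability (BorelSigma w0) R),
  charges_open mu ->
  forall m : nat, (1 <= m)%N -> theta m <= 1 ->
  forall g : Sigma A -> R[i], inV g -> condH b1 b2 theta g ->
  let gm := Em mu m g in
  (forall phi, inB theta phi -> inB theta (transfer gm phi)) /\
  (forall phi, inB theta phi ->
     inB theta (fun w => (transfer g phi w - transfer gm phi w)%R) /\
     (normB theta (fun w => (transfer g phi w - transfer gm phi w)%R)
        <= (C3 * theta m)%:E * normB theta phi)%E).
Proof.
set B := expbound b1 b2; set K := N%:R * B * b2 * (60 + 12 * theta 1).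
have B0 : 0 <= B := expbound_ge0 b1_gt0 b2_gt0.
have b20 := ltW b2_gt0; have T0 : 0 <= theta 1 := theta_ge0 _ (leqnn 1).
have K0 : 0 <= K.
  apply: mulr_ge0; last by apply: addr_ge0 => //; exact: mulr_ge0.
  by apply: mulr_ge0 => //; exact: mulr_ge0.
exists (K + 1); split; first by rewrite ltr_pwDr.
move=> A _ _ w0 mu mu_open m m_ge1 tm1 g _ gH gm.
have tm0 : 0 <= theta m := theta_ge0 _ m_ge1.
have W0 : 0 <= 30 * B * b2 * theta 1.
  by apply: mulr_ge0 => //; apply: mulr_ge0 => //; exact: mulr_ge0.
split => phi phiB.
  rewrite transferE.
  have hU x : cmod (cexp (gm x)) <= B.
    by rewrite cmod_cexp (exp_Re_Em theta_decr theta_ge0 b2_gt0 mu_open m_ge1 tm1 gH).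
  have [] // := wtransfer_normB _ theta_decr theta_ge0 theta_cvg0 w0 B0 W0 hU
    (weight_Em theta_decr theta_ge0 b1_gt0 b2_gt0 mu_open m_ge1 tm1 gH) (lexx _) phiB.
rewrite !transferE wtransferBl.
have U0 : 0 <= 12 * B * b2 * theta m.
  by apply: mulr_ge0 => //; apply: mulr_ge0 => //; exact: mulr_ge0.
have W'0 : 0 <= 24 * B * b2 * theta m.
  by apply: mulr_ge0 => //; apply: mulr_ge0 => //; exact: mulr_ge0.
apply: (wtransfer_normB _ theta_decr theta_ge0 theta_cvg0 w0 U0 W'0
  (diff_sup theta_decr theta_ge0 b1_gt0 b2_gt0 mu_open m_ge1 tm1 gH)
  (weight_diff theta_decr theta_ge0 b1_gt0 b2_gt0 mu_open m_ge1 tm1 gH) _ phiB).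
rewrite -subr_ge0.
have -> : (K + 1) * theta m - N%:R * (3 * (12 * B * b2 * theta m) +
    24 * B * b2 * theta m + 12 * B * b2 * theta m * theta 1) = theta m.
  by rewrite /K; ring.
exact: tm0.
Qed.
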